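(* For each $n\ge1$ there is a bijection $\varphi'$ from the set of plane trees with $n$ edges to $\mathfrak S_n(321)$ such that, for every such tree $T$ and $\pi=\varphi'(T)$: (1) the number of young leaves of $T$ equals the number of indices $i\in\{1,\dots,n-1\}$ such that both $\pi_i$ and $\pi_{i+1}$ are deficiencies of $\pi$, plus $1$ if $\pi_n<n$; (2) the number of old leaves of $T$ equals the number of weak excedances $\pi_i$ of $\pi$ that are not followed by another weak excedance (i.e. $i=n$, or $\pi_{i+1}$ is not a weak excedance).
   Context: A plane tree is a rooted tree in which the children of each vertex are linearly ordered. A leaf is a vertex with no children; the one-vertex tree has no leaves. A leaf is old if it is the leftmost child of its parent, young otherwise. $\mathfrak S_n(321)$ is the set of permutations $\pi=\pi_1\cdots\pi_n$ of $\{1,\dots,n\}$ having no indices $a<b<c$ with $\pi_a>\pi_b>\pi_c$. An entry $\pi_i$ is a weak excedance if $\pi_i\ge i$ and a deficiency if $\pi_i<i$. *)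

From mathcomp Require Import all_boot all_fingroup.
Set Implicit Arguments. Unset Strict Implicit. Unset Printing Implicit Defensive.

Inductive ptree : Type := Node of seq ptree.

Fixpoint edges (t : ptree) : nat :=
  let: Node ts := t in sumn (map (fun c => (edges c).+1) ts).

Definition is_leafb (t : ptree) : bool := let: Node ts := t in nilp ts.

(* Leaves are non-root vertices with no children (so the one-vertex tree has
   no leaves).  Old leaf: leftmost child of its parent; young leaf: otherwise. *)
Fixpoint old_leaves (t : ptree) : nat :=
  let: Node ts := t in
  (if ts is c :: _ then nat_of_bool (is_leafb c) else 0) + sumn (map old_leaves ts).

Fixpoint young_leaves (t : ptree) : nat :=
  let: Node ts := t in
  count is_leafb (behead ts) + sumn (map young_leaves ts).

(* Permutations of {1..n} are represented by 'S_n acting on {0..n-1}: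
   pi_{j+1} = (p j) + 1.  pv p j = value at 0-based position j (0 if j >= n). *)
Definition pv n (p : 'S_n) (j : nat) : nat :=
  nth 0 (map (fun i => val (p i)) (enum 'I_n)) j.

Definition avoids321 n (p : 'S_n) : bool :=
  [forall a : 'I_n, forall b : 'I_n, forall c : 'I_n,
     ((a < b) && (b < c)) ==> ~~ ((p b < p a) && (p c < p b))].

Definition wexc n (p : 'S_n) (j : nat) : bool := (j < n) && (j <= pv p j).
Definition defic n (p : 'S_n) (j : nat) : bool := (j < n) && (pv p j < j).

Definition stat_young n (p : 'S_n) : nat :=
  count (fun j => defic p j && defic p j.+1) (iota 0 n.-1)
  + nat_of_bool (pv p n.-1 < n.-1).

Definition stat_old n (p : 'S_n) : nat :=
  count (fun j => wexc p j && ~~ wexc p j.+1) (iota 0 n).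

From mathcomp Require Import all_boot all_fingroup zify.
Set Implicit Arguments. Unset Strict Implicit. Unset Printing Implicit Defensive.

(** A 321-avoiding permutation is the merge of two increasing sequences: its
weak excedances and its deficiencies.  Hence it is determined by the set [W]
of weak-excedance positions and the set [V] of their values, and the pairs
[(W, V)] that occur are exactly the ballot pairs: [|W| = |V|] and, for every
[j], fewer elements of [V] lie below [j] than elements of [W] below [j + 1].
On the tree side, the preorder degree sequence [d_0 ... d_n] (Łukasiewicz
word) determines a plane tree with [n] edges.  Taking for [W] the internal
vertices [j < n] and for [V] the values [d_0 + ... + d_j - 1] ([j] internal)
gives a ballot pair, and every ballot pair arises from exactly one tree.
A leaf is a zero entry [d_(j+1)]; it is old iff [d_j > 0] and young iff
[d_j = 0], which translates into the two statistics since [j] is a weak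
excedance iff [d_j > 0]. *)

Definition rank (P : pred nat) x := count P (iota 0 x).
Definition unrank (P : pred nat) n r := nth 0 (filter P (iota 0 n)) r.

Lemma rankS (P : pred nat) x : rank P x.+1 = rank P x + P x.
Proof. by rewrite /rank -addn1 iotaD count_cat /= addn0 add0n. Qed.

Lemma rank_mono (P : pred nat) x y : x <= y -> rank P x <= rank P y.
Proof. by move=> /subnKC <-; rewrite /rank iotaD count_cat leq_addr. Qed.

Lemma rank_leq (P : pred nat) x : rank P x <= x.
Proof. by rewrite /rank -[X in _ <= X](size_iota 0 x) count_size. Qed.

Lemma rank_lt (P : pred nat) x y : x < y -> P x -> rank P x < rank P y.
Proof.
move=> lxy Px; apply: (@leq_trans (rank P x.+1)); last exact: rank_mono.
by rewrite rankS Px addn1.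
Qed.

Lemma rankC (P : pred nat) x : rank (predC P) x = x - rank P x.
Proof. rewrite /rank -{2}(size_iota 0 x) -(count_predC P (iota 0 x)); lia. Qed.

Lemma eq_rank (P Q : pred nat) x :
  (forall y, y < x -> P y = Q y) -> rank P x = rank Q x.
Proof. by move=> PQ; apply: eq_in_count => y; rewrite mem_iota => /andP[_ /PQ]. Qed.

Lemma card_ord_pred n (P : pred nat) : #|[set i : 'I_n | P i]| = count P (iota 0 n).
Proof.
rewrite -val_enum_ord count_map cardsE cardE /enum_mem size_filter /=.
by rewrite filter_predT; apply: eq_count => i.
Qed.

Lemma rank_card n (P : pred nat) x : x <= n ->
  rank P x = #|[set i : 'I_n | P i && (i < x)]|.
Proof.
move=> le_xn; rewrite (card_ord_pred n (fun i => P i && (i < x))) /rank.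
rewrite -(subnKC le_xn) iotaD count_cat add0n.
rewrite [count _ (iota x _)](eq_in_count (a2 := pred0)); last first.
  by move=> i; rewrite mem_iota => /andP[xi _] /=; rewrite ltnNge xi andbF.
rewrite count_pred0 addn0; apply: eq_in_count => i; rewrite mem_iota /= add0n.
by move=> ->; rewrite andbT.
Qed.

Lemma card_ord_lt n m : m <= n -> #|[set i : 'I_n | i < m]| = m.
Proof.
move=> le_mn; have := rank_card (fun _ => true) le_mn.
rewrite /rank count_predT size_iota => E.
by rewrite [RHS]E; apply: eq_card => i; rewrite !inE.
Qed.

Lemma unrankK n (P : pred nat) x : x < n -> P x -> unrank P n (rank P x) = x.
Proof.
elim: n => // n IH; rewrite ltnS leq_eqVlt => /orP[/eqP -> | lt_xn] Px.
  by rewrite /unrank -addn1 iotaD filter_cat nth_cat size_filter ltnn subnn /= Px.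
by rewrite /unrank -addn1 iotaD filter_cat nth_cat size_filter rank_lt //; apply: IH.
Qed.

Lemma unrankP n (P : pred nat) r : r < rank P n ->
  [/\ unrank P n r < n, P (unrank P n r) & rank P (unrank P n r) = r].
Proof.
move=> lt_r; set y := unrank P n r.
have : y \in filter P (iota 0 n) by rewrite mem_nth // size_filter.
rewrite mem_filter mem_iota add0n => /andP[Py lt_yn]; split => //.
have s_uniq : uniq (filter P (iota 0 n)) by rewrite filter_uniq // iota_uniq.
have lt_ry : rank P y < size (filter P (iota 0 n)) by rewrite size_filter rank_lt.
apply/eqP; rewrite -(nth_uniq 0 lt_ry _ s_uniq) ?size_filter //.
by rewrite -/(unrank P n _) unrankK.
Qed.

Lemma unrank_lt n (P : pred nat) r x : r < rank P n ->
  (unrank P n r < x) = (r < rank P x).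
Proof.
move=> /unrankP[_ Py ry]; case: ltnP => [lt_yx | le_xy]; apply/esym.
  by rewrite -[X in X < _]ry rank_lt.
by apply/negbTE; rewrite -leqNgt -[X in _ <= X]ry rank_mono.
Qed.

Lemma eq_unrank (P Q : pred nat) n r :
  (forall y, y < n -> P y = Q y) -> unrank P n r = unrank Q n r.
Proof.
move=> PQ; rewrite /unrank (@eq_in_filter _ P Q) // => y.
by rewrite mem_iota add0n => /andP[_ /PQ].
Qed.

Definition ballot n (W V : pred nat) :=
  rank W n = rank V n /\ forall j, j < n -> rank V j < rank W j.+1.

(* The [j - rank W j] below is [rank (predC W) j]. *)
Definition arrange n (W V : pred nat) j :=
  if W j then unrank V n (rank W j) else unrank (predC V) n (j - rank W j).

Lemma rank_nonW n (W V : pred nat) j : rank W n = rank V n ->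
  j < n -> ~~ W j -> j - rank W j < rank (predC V) n.
Proof.
move=> WV lt_jn nWj; rewrite rankC -WV.
by have := rank_lt lt_jn (nWj : predC W j); rewrite !rankC.
Qed.

Lemma rank_W n (W V : pred nat) j : rank W n = rank V n ->
  j < n -> W j -> rank W j < rank V n.
Proof. by move=> WV lt_jn Wj; rewrite -WV rank_lt. Qed.

Section Arrange.
Variables (n : nat) (W V : pred nat).
Hypothesis WV : ballot n W V.

Lemma arrangeP j : j < n ->
  [/\ arrange n W V j < n, V (arrange n W V j) = W j &
      if W j then rank V (arrange n W V j) = rank W j
      else rank (predC V) (arrange n W V j) = j - rank W j].
Proof.
move=> lt_jn; rewrite /arrange; case: ifPn => [Wj | nWj].
  by case: (unrankP (rank_W (proj1 WV) lt_jn Wj)).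
by case: (unrankP (rank_nonW (proj1 WV) lt_jn nWj)) => ? /negbTE.
Qed.

Lemma arrange_ltW i j : i < j -> j < n -> W i -> W j ->
  arrange n W V i < arrange n W V j.
Proof.
move=> lt_ij lt_jn Wi Wj; have lt_in := ltn_trans lt_ij lt_jn.
have [_ _] := arrangeP lt_jn; rewrite Wj => rj.
by rewrite {1}/arrange Wi (unrank_lt _ (rank_W (proj1 WV) lt_in Wi)) rj rank_lt.
Qed.

Lemma arrange_ltC i j : i < j -> j < n -> ~~ W i -> ~~ W j ->
  arrange n W V i < arrange n W V j.
Proof.
move=> lt_ij lt_jn nWi nWj; have lt_in := ltn_trans lt_ij lt_jn.
have [_ _] := arrangeP lt_jn; rewrite (negbTE nWj) => rj.
rewrite {1}/arrange (negbTE nWi) (unrank_lt _ (rank_nonW (proj1 WV) lt_in nWi)) rj.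
by rewrite -!rankC rank_lt.
Qed.

Lemma arrange_lt i j : i < j -> j < n -> W i = W j ->
  arrange n W V i < arrange n W V j.
Proof.
move=> lt_ij lt_jn Wij; case Wj: (W j) Wij => Wi.
  by apply: arrange_ltW; rewrite ?Wi.
by apply: arrange_ltC; rewrite ?Wi ?Wj.
Qed.

Lemma arrange_inj i j : i < n -> j < n -> arrange n W V i = arrange n W V j -> i = j.
Proof.
move=> lt_in lt_jn eq_ij.
have W_ij : W i = W j.
  by have [_ <- _] := arrangeP lt_in; have [_ <- _] := arrangeP lt_jn; rewrite eq_ij.
case: (ltngtP i j) => // lt.
  by have := arrange_lt lt lt_jn W_ij; rewrite eq_ij ltnn.
by have := arrange_lt lt lt_in (esym W_ij); rewrite eq_ij ltnn.
Qed.

Lemma leq_arrange j : j < n -> (j <= arrange n W V j) = W j.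
Proof.
move=> lt_jn; have := (proj2 WV) j lt_jn; rewrite rankS /arrange.
case: ifPn => [Wj | nWj] bal.
  by rewrite leqNgt (unrank_lt _ (rank_W (proj1 WV) lt_jn Wj)); apply/negP; lia.
rewrite leqNgt (unrank_lt _ (rank_nonW (proj1 WV) lt_jn nWj)) rankC.
have := rank_leq V j; have := rank_leq W j; lia.
Qed.

Lemma ballot_valE v : v < n -> V v = [exists i : 'I_n, W i && (arrange n W V i == v)].
Proof.
move=> lt_vn; apply/idP/existsP => [Vv | [i /andP[Wi /eqP <-]]]; last first.
  by have [_ -> _] := arrangeP (ltn_ord i).
have lt_r : rank V v < rank W n by rewrite (proj1 WV) rank_lt.
have [lt_in Wi ri] := unrankP lt_r.
by exists (Ordinal lt_in); rewrite /= Wi /arrange Wi ri unrankK ?eqxx.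
Qed.

End Arrange.

Lemma eq_arrange n (W1 W2 V1 V2 : pred nat) j :
  (forall x, x < n -> W1 x = W2 x) -> (forall x, x < n -> V1 x = V2 x) -> j < n ->
  arrange n W1 V1 j = arrange n W2 V2 j.
Proof.
move=> eW eV lt_jn; rewrite /arrange (eW _ lt_jn) (@eq_rank W1 W2); last first.
  by move=> y lt_yj; apply: eW; apply: ltn_trans lt_jn.
rewrite (eq_unrank _ eV) (@eq_unrank (predC V1) (predC V2)) // => y lt_yn /=.
by rewrite eV.
Qed.

(* The junk value [1] for non-injective [f] keeps [arrange_perm] proof-free. *)
Definition perm_of n (f : 'I_n -> 'I_n) : 'S_n :=
  if injectiveP f is ReflectT f_inj then perm f_inj else 1%g.

Lemma perm_ofE n (f : 'I_n -> 'I_n) : injective f -> forall i, perm_of f i = f i.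
Proof. by move=> f_inj i; rewrite /perm_of; case: injectiveP => // ?; rewrite permE. Qed.

Definition arrange_perm n W V : 'S_n :=
  perm_of (fun i : 'I_n => insubd i (arrange n W V i)).

Lemma arrange_permE n W V : ballot n W V ->
  forall i : 'I_n, val (arrange_perm n W V i) = arrange n W V i.
Proof.
move=> WV; have valE (i : 'I_n) : val (insubd i (arrange n W V i)) = arrange n W V i.
  by rewrite val_insubd; case: (arrangeP WV (ltn_ord i)) => ->.
move=> i; rewrite perm_ofE ?valE // => j k /(congr1 val); rewrite !valE.
by move=> /(arrange_inj WV (ltn_ord j) (ltn_ord k)) /val_inj.
Qed.

Lemma pvE n (p : 'S_n) (i : 'I_n) : pv p i = p i.
Proof. by rewrite /pv (nth_map i) ?size_enum_ord // nth_ord_enum. Qed.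

Lemma wexcE n (p : 'S_n) (i : 'I_n) : wexc p i = (i <= p i).
Proof. by rewrite /wexc pvE ltn_ord. Qed.

Lemma wexc_arrange_perm n W V : ballot n W V ->
  forall j, j < n -> wexc (arrange_perm n W V) j = W j.
Proof.
move=> WV j lt_jn; have -> : j = Ordinal lt_jn by [].
by rewrite wexcE arrange_permE // leq_arrange.
Qed.

Lemma arrange_perm_avoids321 n W V : ballot n W V -> avoids321 (arrange_perm n W V).
Proof.
move=> WV; apply/forallP => a; apply/forallP => b; apply/forallP => c.
apply/implyP => /andP[lt_ab lt_bc]; rewrite !arrange_permE //.
have lt_ac := ltn_trans lt_ab lt_bc.
have [lt_bn lt_cn] := (ltn_ord b, ltn_ord c).
apply/negP => /andP[lt_ba lt_cb].
(* Two of the three positions lie in the same class, on which [arrange] increases. *)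
case Wa: (W a); case Wb: (W b); case Wc: (W c);
  first [ have := arrange_lt WV lt_ab lt_bn (etrans Wa (esym Wb)); lia
        | have := arrange_lt WV lt_bc lt_cn (etrans Wb (esym Wc)); lia
        | have := arrange_lt WV lt_ac lt_cn (etrans Wa (esym Wc)); lia ].
Qed.

Section Avoid321.
Variables (n : nat) (p : 'S_n).
Hypothesis p321 : avoids321 p.

Lemma avoids321F (a b c : 'I_n) : a < b -> b < c -> p b < p a -> p c < p b -> False.
Proof.
move=> lt_ab lt_bc lt_ba lt_cb.
move: p321 => /forallP /(_ a) /forallP /(_ b) /forallP /(_ c) /implyP.
by rewrite lt_ab lt_bc lt_ba lt_cb => /(_ isT).
Qed.

Lemma perm_val_eq (i j : 'I_n) : (val (p i) == val (p j)) = (i == j).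
Proof. by rewrite val_eqE (inj_eq (@perm_inj _ p)). Qed.

(* Otherwise all values below [p j] sit left of [j] and differ from [p i], forcing [p j < j]. *)
Lemma lt_perm_wexc (i j : 'I_n) : i < j -> j <= p j -> p i < p j.
Proof.
move=> lt_ij wj; rewrite ltnNge leq_eqVlt perm_val_eq negb_or eq_sym neq_ltn lt_ij /=.
apply/negP => lt_ji.
have left_of k : p k < p j -> k < j.
  move=> lt_kj; case: (ltngtP k j) => // [lt_jk | /val_inj eq_kj].
    by case: (avoids321F lt_ij lt_jk lt_ji lt_kj).
  by rewrite eq_kj ltnn in lt_kj.
have card_below : #|[set k : 'I_n | p k < p j]| = p j.
  rewrite -[RHS](card_ord_lt (ltnW (ltn_ord (p j)))) -[RHS](card_preimset _ (@perm_inj _ p)).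
  by apply: eq_card => k; rewrite !inE.
have sub : [set k : 'I_n | p k < p j] \subset [set k : 'I_n | k < j] :\ i.
  apply/subsetP => k; rewrite !inE => lt_kj; rewrite left_of // andbT.
  by apply: contraTneq lt_kj => ->; rewrite -leqNgt ltnW.
have := subset_leq_card sub; rewrite card_below.
have := cardsD1 i [set k : 'I_n | k < j]; rewrite inE lt_ij (card_ord_lt (ltnW (ltn_ord j))).
lia.
Qed.

Lemma lt_perm_defic (i j : 'I_n) : i < j -> p i < i -> p i < p j.
Proof.
move=> lt_ij di; rewrite ltnNge leq_eqVlt perm_val_eq negb_or neq_ltn lt_ij orbT /=.
apply/negP => lt_ji.
have right_of k : p i < p k -> i < k.
  move=> lt_ik; case: (ltngtP k i) => // [lt_ki | /val_inj eq_ki].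
    by case: (avoids321F lt_ki lt_ij lt_ik lt_ji).
  by rewrite eq_ki ltnn in lt_ik.
have card_above : #|[set k : 'I_n | p i < p k]| = n - (p i).+1.
  have := cardsC [set v : 'I_n | v < (p i).+1]; rewrite card_ord card_ord_lt // => cardC.
  rewrite -{}[RHS](_ : #|~: [set v : 'I_n | v < (p i).+1]| = _); last lia.
  rewrite -[RHS](card_preimset _ (@perm_inj _ p)).
  by apply/eq_card => k; rewrite !inE -leqNgt.
have sub : [set k : 'I_n | p i < p k] \subset ~: [set k : 'I_n | k < i.+1] :\ j.
  apply/subsetP => k; rewrite !inE -leqNgt => lt_ik; rewrite right_of // andbT.
  by apply: contraTneq lt_ik => ->; rewrite -leqNgt ltnW.
have := subset_leq_card sub; rewrite card_above.
have := cardsD1 j (~: [set k : 'I_n | k < i.+1]); rewrite !inE -leqNgt lt_ij.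
have := cardsC [set k : 'I_n | k < i.+1]; rewrite card_ord card_ord_lt //.
have := ltn_ord j; lia.
Qed.

Definition wexc_val : pred nat := fun v => [exists i : 'I_n, wexc p i && (val (p i) == v)].

Lemma wexc_valE (k : 'I_n) : wexc_val (p k) = wexc p k.
Proof.
apply/existsP/idP => [[i /andP[wi /eqP /val_inj /perm_inj <-]] // | wk].
by exists k; rewrite wk eqxx.
Qed.

Lemma ltn_perm_wexc (i k : 'I_n) : i <= p i -> k <= p k -> (p k < p i) = (k < i).
Proof.
move=> wi wk; case: (ltngtP k i) => [lt_ki | lt_ik | /val_inj ->]; last exact: ltnn.
  exact: lt_perm_wexc.
by apply/negbTE; rewrite -leqNgt ltnW // lt_perm_wexc.
Qed.

Lemma ltn_perm_defic (i k : 'I_n) : p i < i -> p k < k -> (p k < p i) = (k < i).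
Proof.
move=> di dk; case: (ltngtP k i) => [lt_ki | lt_ik | /val_inj ->]; last exact: ltnn.
  exact: lt_perm_defic.
by apply/negbTE; rewrite -leqNgt ltnW // lt_perm_defic.
Qed.

Lemma rank_wexc_valE (i : 'I_n) :
  rank wexc_val (p i) = #|[set k : 'I_n | wexc p k && (p k < p i)]|.
Proof.
rewrite (rank_card _ (ltnW (ltn_ord (p i)))) -(card_preimset _ (@perm_inj _ p)).
by apply: eq_card => k; rewrite !inE wexc_valE.
Qed.

Lemma avoids321_arrange (i : 'I_n) : val (p i) = arrange n (wexc p) wexc_val i.
Proof.
have le_in : (i : nat) <= n by apply: ltnW.
rewrite /arrange; case: ifPn => wi.
  rewrite -[LHS](@unrankK n wexc_val _ (ltn_ord (p i))) ?wexc_valE //; congr unrank.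
  rewrite rank_wexc_valE (rank_card _ le_in); apply: eq_card => k; rewrite !inE.
  case wk: (wexc p k) => //=; apply: ltn_perm_wexc; by rewrite -wexcE.
have nvi : predC wexc_val (p i) by rewrite /= wexc_valE.
rewrite -[LHS](unrankK (ltn_ord (p i)) nvi); congr unrank.
rewrite -rankC (rank_card _ (ltnW (ltn_ord (p i)))) (rank_card _ le_in).
rewrite -(card_preimset _ (@perm_inj _ p)); apply: eq_card => k; rewrite !inE wexc_valE.
case wk: (wexc p k) => //=; apply: ltn_perm_defic; by rewrite ltnNge -wexcE ?wk.
Qed.

Lemma ballot_wexc : ballot n (wexc p) wexc_val.
Proof.
have E : rank (wexc p) n = rank wexc_val n.
  rewrite (rank_card _ (leqnn n)) (rank_card wexc_val (leqnn n)).
  rewrite -[RHS](card_preimset _ (@perm_inj _ p)).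
  by apply: eq_card => k; rewrite !inE !ltn_ord wexc_valE.
split => // j lt_jn; rewrite rankS.
have := wexcE p (Ordinal lt_jn); have := avoids321_arrange (Ordinal lt_jn).
rewrite /= /arrange => ->; case: ifPn => [wj | nwj].
  by rewrite leqNgt (unrank_lt _ (rank_W E lt_jn wj)); lia.
rewrite leqNgt (unrank_lt _ (rank_nonW E lt_jn nwj)) rankC.
have := rank_leq wexc_val j; have := rank_leq (wexc p) j; lia.
Qed.

Lemma arrange_perm_wexc : arrange_perm n (wexc p) wexc_val = p.
Proof.
apply/permP => i; apply/val_inj.
by rewrite (arrange_permE ballot_wexc) avoids321_arrange.
Qed.

End Avoid321.

Definition psum (D : seq nat) t := sumn (take t D).
Definition internal (D : seq nat) : pred nat := fun j => 0 < nth 0 D j.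
Definition internal_val n (D : seq nat) : pred nat :=
  fun v => has (fun i => internal D i && (psum D i.+1 == v.+1)) (iota 0 n).
Definition dyck_seq n D := psum D n = n /\ forall t, t <= n -> t <= psum D t.

Lemma psumS D t : psum D t.+1 = psum D t + nth 0 D t.
Proof.
rewrite /psum; case: (ltnP t (size D)) => [lt_tD | le_Dt].
  by rewrite (take_nth 0 lt_tD) sumn_rcons.
by rewrite nth_default // !take_oversize ?addn0 //; apply: leqW.
Qed.

Lemma psum_mono D t u : t <= u -> psum D t <= psum D u.
Proof.
move=> /subnKC <-; elim: (u - t) => [|k IH]; first by rewrite addn0.
by rewrite addnS psumS; apply: leq_trans IH (leq_addr _ _).
Qed.

Section DyckSeq.
Variables (n : nat) (D : seq nat).
Hypothesis D_dyck : dyck_seq n D.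

Lemma psum_le t : t <= n -> psum D t <= n.
Proof. by move=> le_tn; case: D_dyck => <- _; apply: psum_mono. Qed.

Lemma psum_internal_inj i j : internal D i -> internal D j ->
  psum D i.+1 = psum D j.+1 -> i = j.
Proof.
rewrite /internal => Di Dj eq_ij; case: (ltngtP i j) => // lt.
  by have := psum_mono D lt; have := psumS D j; lia.
by have := psum_mono D lt; have := psumS D i; lia.
Qed.

Definition internal_val_of (i : 'I_n) : 'I_n := insubd i (psum D i.+1).-1.

Lemma internal_val_ofE (i : 'I_n) : (internal_val_of i : nat).+1 = psum D i.+1.
Proof.
have := (proj2 D_dyck) i.+1 (ltn_ord i); have := psum_le (ltn_ord i).
by rewrite /internal_val_of val_insubd; case: ifP; lia.
Qed.

Lemma card_internal_val (Q : pred nat) :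
  #|[set v : 'I_n | internal_val n D v && Q v.+1]| =
  #|[set i : 'I_n | internal D i && Q (psum D i.+1)]|.
Proof.
rewrite -[RHS](card_in_imset (f := internal_val_of)); last first.
  move=> i j; rewrite !inE => /andP[Di _] /andP[Dj _] /(congr1 (succn \o val)) /=.
  by rewrite !internal_val_ofE => /(psum_internal_inj Di Dj) /val_inj.
apply: eq_card => v; rewrite inE; apply/andP/imsetP => [[/hasP[i]] | [i]].
  rewrite mem_iota add0n => /andP[_ lt_in] /andP[Di /eqP eq_iv] Qv.
  exists (Ordinal lt_in); first by rewrite inE /= Di eq_iv Qv.
  by apply/val_inj/succn_inj; rewrite internal_val_ofE eq_iv.
rewrite inE => /andP[Di Qi] ->; rewrite internal_val_ofE; split => //.
by apply/hasP; exists (val i); rewrite ?mem_iota ?ltn_ord // Di internal_val_ofE eqxx.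
Qed.

Lemma last_internal j : j < n ->
  exists2 i, i <= j & internal D i && (psum D i.+1 == psum D j.+1).
Proof.
elim: j => [|j IH] lt_jn.
  exists 0 => //; rewrite eqxx andbT /internal.
  by have := (proj2 D_dyck) 1 lt_jn; rewrite psumS /psum take0 /=; lia.
case Dj: (internal D j.+1); first by exists j.+1; rewrite ?Dj ?eqxx.
have [i le_ij /andP[Di /eqP eq_ij]] := IH (ltnW lt_jn).
exists i; rewrite ?leqW // Di (psumS D j.+1) eq_ij.
by move: Dj; rewrite /internal lt0n => /negbFE /eqP ->; rewrite addn0 eqxx.
Qed.

Lemma ballot_internal : ballot n (internal D) (internal_val n D).
Proof.
split.
  rewrite (rank_card (internal_val n D) (leqnn n)) (rank_card (internal D) (leqnn n)).
  have := card_internal_val predT.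
  rewrite (@eq_card _ _ [set v : 'I_n | internal_val n D v && (v < n)]) => [-> | v].
    by apply: eq_card => i; rewrite !inE ltn_ord.
  by rewrite !inE ltn_ord.
move=> j lt_jn.
rewrite (rank_card (internal_val n D) (ltnW lt_jn)) (rank_card (internal D) lt_jn).
rewrite (@eq_card _ _ [set v : 'I_n | internal_val n D v && (fun x => x <= j) v.+1]) //.
rewrite (card_internal_val (fun x => x <= j)); apply: proper_card; apply/properP; split.
  apply/subsetP => i; rewrite !inE => /andP[-> le_ij] /=.
  by have := (proj2 D_dyck) i.+1 (ltn_ord i); lia.
have [i le_ij /andP[Di /eqP eq_ij]] := last_internal lt_jn.
have lt_in : i < n by apply: leq_ltn_trans le_ij lt_jn.
exists (Ordinal lt_in); first by rewrite !inE Di /= ltnS.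
by rewrite !inE Di /= eq_ij -ltnNge; apply: (proj2 D_dyck) j.+1 lt_jn.
Qed.

Lemma internal_valP j : j < n -> internal D j ->
  [/\ (psum D j.+1).-1 < n, internal_val n D (psum D j.+1).-1 & psum D j < psum D j.+1].
Proof.
move=> lt_jn Dj; have := (proj2 D_dyck) j.+1 lt_jn; have := psum_le lt_jn.
have lt_psum : psum D j < psum D j.+1 by rewrite psumS; move: Dj; rewrite /internal; lia.
move=> le_n le_j; split => //; first lia.
by apply/hasP; exists j; rewrite ?mem_iota // Dj; apply/eqP; lia.
Qed.

End DyckSeq.

Lemma internal_val_psum n D j v :
  internal_val n D v -> psum D j < v.+1 -> psum D j.+1 <= v.+1.
Proof.
move=> /hasP[i _ /andP[_ /eqP <-]] lt_jv; case: (ltnP i j) => [lt_ij | le_ji].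
  by have := psum_mono D lt_ij; lia.
exact: psum_mono.
Qed.

(* At an internal position [t], [psum D t.+1 - 1] is the least element of
   [internal_val n D] that is at least [psum D t]. *)
Lemma dyck_seq_psum_eq n D1 D2 : dyck_seq n D1 -> dyck_seq n D2 ->
  (forall j, j < n -> internal D1 j = internal D2 j) ->
  (forall v, v < n -> internal_val n D1 v = internal_val n D2 v) ->
  forall t, t <= n -> psum D1 t = psum D2 t.
Proof.
move=> D1_dyck D2_dyck eI eV; elim => [|t IH] lt_tn; first by rewrite /psum !take0.
have eq_t := IH (ltnW lt_tn).
case D1t: (internal D1 t); last first.
  have D2t : internal D2 t = false by rewrite -eI.
  by rewrite !psumS eq_t; move: D1t D2t; rewrite /internal; lia.
have D2t : internal D2 t by rewrite -eI.
have [lt1 V1 lt_psum1] := internal_valP D1_dyck lt_tn D1t.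
have [lt2 V2 lt_psum2] := internal_valP D2_dyck lt_tn D2t.
rewrite eV // in V1; rewrite -eV // in V2.
have := @internal_val_psum _ _ t _ V1; have := @internal_val_psum _ _ t _ V2; lia.
Qed.

Lemma eq_dyck_seq n D1 D2 : dyck_seq n D1 -> dyck_seq n D2 ->
  size D1 = n.+1 -> size D2 = n.+1 -> nth 0 D1 n = 0 -> nth 0 D2 n = 0 ->
  (forall j, j < n -> internal D1 j = internal D2 j) ->
  (forall v, v < n -> internal_val n D1 v = internal_val n D2 v) -> D1 = D2.
Proof.
move=> D1_dyck D2_dyck sz1 sz2 last1 last2 eI eV.
have eS := dyck_seq_psum_eq D1_dyck D2_dyck eI eV.
apply: (@eq_from_nth _ 0); first by rewrite sz1 sz2.
move=> j; rewrite sz1 ltnS leq_eqVlt => /orP[/eqP -> | lt_jn]; first by rewrite last1 last2.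
by have := psumS D1 j; have := psumS D2 j; rewrite !eS ?(ltnW lt_jn) //; lia.
Qed.

Section BallotWord.
Variables (n : nat) (W V : pred nat).
Hypothesis WV : ballot n W V.

(* The prefix sums of the Łukasiewicz word to be rebuilt from [(W, V)]: one
   more than the [V]-value matched with the last [W]-position below [j]. *)
Definition ballot_psum j := if rank W j is r.+1 then (unrank V n r).+1 else 0.
Definition ballot_word := mkseq (fun j => ballot_psum j.+1 - ballot_psum j) n ++ [:: 0].

Lemma ballot_psumW j : W j -> ballot_psum j.+1 = (unrank V n (rank W j)).+1.
Proof. by move=> Wj; rewrite /ballot_psum rankS Wj addn1. Qed.

Lemma ballot_psum_step j : j < n ->
  if W j then ballot_psum j < ballot_psum j.+1 else ballot_psum j.+1 == ballot_psum j.
Proof.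
move=> lt_jn; case: ifPn => [Wj | /negbTE nWj]; last by rewrite /ballot_psum rankS nWj addn0 eqxx.
have lt_r := rank_W (proj1 WV) lt_jn Wj.
rewrite ballot_psumW // /ballot_psum; case e_r: (rank W j) lt_r => [|r] // lt_r.
by rewrite ltnS (unrank_lt _ (ltn_trans (ltnSn r) lt_r)); case: (unrankP lt_r) => _ _ ->.
Qed.

Lemma ballot_psum_mono j : j < n -> ballot_psum j <= ballot_psum j.+1.
Proof. by move/ballot_psum_step; case: (W j) => [/ltnW | /eqP ->]. Qed.

Lemma nth_ballot_word j : j < n -> nth 0 ballot_word j = ballot_psum j.+1 - ballot_psum j.
Proof. by move=> lt_jn; rewrite /ballot_word nth_cat size_mkseq lt_jn nth_mkseq. Qed.

Lemma nth_ballot_word_last : nth 0 ballot_word n = 0.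
Proof. by rewrite /ballot_word nth_cat size_mkseq ltnn subnn. Qed.

Lemma size_ballot_word : size ballot_word = n.+1.
Proof. by rewrite size_cat size_mkseq addn1. Qed.

Lemma psum_ballot_word t : t <= n -> psum ballot_word t = ballot_psum t.
Proof.
elim: t => [|t IH] lt_tn; first by rewrite /psum take0 /ballot_psum /rank.
rewrite psumS IH ?(ltnW lt_tn) // nth_ballot_word //.
by have := ballot_psum_mono lt_tn; lia.
Qed.

Lemma internal_ballot_word j : j < n -> internal ballot_word j = W j.
Proof.
move=> lt_jn; rewrite /internal nth_ballot_word //; have := ballot_psum_step lt_jn.
by case: (W j) => [| /eqP ->]; lia.
Qed.

Lemma dyck_seq_ballot_word : 0 < n -> dyck_seq n ballot_word.
Proof.
move=> n0; case: WV => eq_rank bal; split.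
  have lt_n1n : n.-1 < n by rewrite prednK.
  have := bal n.-1 lt_n1n; rewrite prednK // eq_rank -{2}(prednK n0) rankS => bal_n.
  have Vn1 : V n.-1 by move: bal_n; case: (V n.-1) => //; lia.
  rewrite psum_ballot_word // /ballot_psum eq_rank -{1}(prednK n0) rankS Vn1 addn1.
  by rewrite unrankK ?prednK.
case=> [|j] // lt_jn; rewrite psum_ballot_word //; have := bal j lt_jn.
have le_r : rank W j.+1 <= rank V n by rewrite -eq_rank rank_mono.
rewrite /ballot_psum; case: (rank W j.+1) le_r => [|r] // lt_r.
by move=> bal_j; rewrite ltnS leqNgt (unrank_lt _ lt_r); lia.
Qed.

Lemma internal_val_ballot_word v : v < n -> internal_val n ballot_word v = V v.
Proof.
move=> lt_vn; apply/hasP/idP => [[i] | Vv].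
  rewrite mem_iota add0n => /andP[_ lt_in] /andP[Di /eqP e_v].
  rewrite internal_ballot_word // in Di.
  rewrite psum_ballot_word // ballot_psumW // in e_v; case: e_v => <-.
  by case: (unrankP (rank_W (proj1 WV) lt_in Di)).
have lt_r : rank V v < rank W n by rewrite (proj1 WV) rank_lt.
have [lt_in Wi r_i] := unrankP lt_r.
exists (unrank W n (rank V v)); first by rewrite mem_iota.
by rewrite internal_ballot_word // Wi psum_ballot_word // ballot_psumW // r_i unrankK ?eqxx.
Qed.

End BallotWord.

Definition root_deg (t : ptree) := let: Node ts := t in size ts.

Fixpoint lword (t : ptree) : seq nat :=
  let: Node ts := t in size ts :: flatten (map lword ts).

Definition lword_forest ts := flatten (map lword ts).

Section NestedInd.
Variable P : ptree -> Prop.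
Hypothesis P_node : forall ts, (forall c, List.In c ts -> P c) -> P (Node ts).

Fixpoint ptree_nested_ind t : P t :=
  let: Node ts := t in
  P_node ((fix all_P (l : seq ptree) : forall c, List.In c l -> P c :=
     match l return forall c, List.In c l -> P c with
     | [::] => fun c (c_in : List.In c [::]) => match c_in with end
     | c0 :: l' => fun c c_in => match c_in with
                   | or_introl e => eq_ind c0 P (ptree_nested_ind c0) c e
                   | or_intror c_in' => all_P l' c c_in'
                   end
     end) ts).

End NestedInd.

Lemma eq_map_In A B (f g : A -> B) (l : seq A) :
  (forall c, List.In c l -> f c = g c) -> map f l = map g l.
Proof.
elim: l => //= a l IH fg; rewrite fg; last by left.
by rewrite IH // => c c_in; apply: fg; right.
Qed.

Lemma size_lword t : size (lword t) = (edges t).+1.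
Proof.
elim/ptree_nested_ind: t => ts IH /=; congr _.+1.
by rewrite size_flatten /shape -map_comp (eq_map_In (g := fun c => (edges c).+1)).
Qed.

Lemma sumn_lword t : sumn (lword t) = edges t.
Proof.
elim/ptree_nested_ind: t => ts IH /=; rewrite sumn_flatten -map_comp.
rewrite (eq_map_In (g := edges)) => [|c /IH //].
by elim: {IH} ts => //= c ts <-; lia.
Qed.

(* [s] is the concatenation of the Łukasiewicz words of [k] trees. *)
Definition forest_word k s :=
  sumn s + k = size s /\ forall t, t < size s -> t < psum s t + k.

Lemma psum_cons a s t : psum (a :: s) t.+1 = a + psum s t.
Proof. by []. Qed.

Lemma forest_word_nil : forest_word 0 [::].
Proof. by []. Qed.

Lemma forest_word_cons m s : forest_word m s -> forest_word 1 (m :: s).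
Proof.
move=> [sum_s psum_s]; split; first by rewrite /= -sum_s; lia.
by case=> [|t] //= lt_t; have := psum_s t lt_t; rewrite psum_cons; lia.
Qed.

Lemma forest_word_cat k l A B :
  forest_word k A -> forest_word l B -> forest_word (k + l) (A ++ B).
Proof.
move=> [sum_A psum_A] [sum_B psum_B]; split; first by rewrite sumn_cat size_cat; lia.
move=> t; rewrite size_cat /psum take_cat => lt_t; case: (ltnP t (size A)) => [lt_tA | le_At].
  by have := psum_A t lt_tA; rewrite /psum; lia.
by rewrite sumn_cat; have := psum_B (t - size A); rewrite /psum; lia.
Qed.

Lemma forest_word_lword t : forest_word 1 (lword t).
Proof.
elim/ptree_nested_ind: t => ts IH; apply: forest_word_cons.
elim: ts IH => [|c ts IHts] IH; first exact: forest_word_nil.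
rewrite /= -add1n; apply: forest_word_cat; first by apply: IH; left.
by apply: IHts => c' c_in; apply: IH; right.
Qed.

Lemma forest_wordP s k : forest_word k s -> exists ts, size ts = k /\ lword_forest ts = s.
Proof.
elim: s k => [|d s IH] k [sum_s psum_s].
  by exists [::]; move: sum_s => /= ?; split => //; lia.
have k_gt0 : 0 < k by have := psum_s 0 isT; rewrite /psum take0.
have [|fs [size_fs <-]] := IH (k.-1 + d).
  split => [| t lt_t]; first by move: sum_s => /=; lia.
  by have := psum_s t.+1 lt_t; rewrite psum_cons; lia.
exists (Node (take d fs) :: drop d fs); split; first by rewrite /= size_drop size_fs; lia.
rewrite /lword_forest /= size_take size_fs.
rewrite (_ : (if d < k.-1 + d then d else k.-1 + d) = d); last by case: ifP; lia.
by rewrite -flatten_cat -map_cat cat_take_drop.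
Qed.

Lemma tree_wordP s : forest_word 1 s -> exists T, lword T = s.
Proof.
move=> /forest_wordP[[|T [|T' ts]] [//= _ <-]].
by exists T; rewrite /lword_forest /= cats0.
Qed.

Lemma lword_cat_inj t1 t2 s1 s2 : lword t1 ++ s1 = lword t2 ++ s2 -> t1 = t2 /\ s1 = s2.
Proof.
elim/ptree_nested_ind: t1 t2 s1 s2 => ts1 IH [ts2] s1 s2 /= [eq_size eq_words].
suff [-> ->] : ts1 = ts2 /\ s1 = s2 by [].
elim: ts1 ts2 eq_size s1 s2 eq_words IH => [|c ts IHts] [|c' ts2] //= eq_size s1 s2.
rewrite -!catA => eq_words IH.
have [<- eq_rest] := IH c (or_introl erefl) _ _ _ eq_words.
have [-> ->] := IHts ts2 ltac:(lia) s1 s2 eq_rest (fun c c_in => IH c (or_intror c_in)).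
by [].
Qed.

Lemma lword_inj : injective lword.
Proof. by move=> t1 t2 eq12; case: (@lword_cat_inj t1 t2 [::] [::]); rewrite ?cats0. Qed.

Lemma last_lword t : last 1 (lword t) = 0.
Proof.
elim/ptree_nested_ind: t => [[|c ts]] IH //=.
suff last_forest x : last x (lword_forest (c :: ts)) = 0 by apply: last_forest.
elim: ts c IH x => [|c' ts IHts] c IH x.
  by rewrite /lword_forest /= cats0; move: (IH c (or_introl erefl)); case: (lword c).
rewrite /lword_forest /= last_cat.
exact: (IHts c' (fun d d_in => IH d (or_intror d_in))).
Qed.

Lemma lwordE t : lword t = root_deg t :: lword_forest (let: Node ts := t in ts).
Proof. by case: t. Qed.

Fixpoint count_adj (f : nat -> nat -> bool) (s : seq nat) : nat :=
  if s is a :: ((b :: _) as s') then f a b + count_adj f s' else 0.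

Lemma count_adj_cat f a A B : count_adj f ((a :: A) ++ B) =
  count_adj f (a :: A) + (if B is b :: _ then f (last a A) b else 0) + count_adj f B.
Proof.
elim: A a => [|a' A IH] a /=; first by case: B => [|b B] //=; rewrite addn0.
by move: (IH a') => /= ->; lia.
Qed.

Lemma count_adjE f s :
  count_adj f s = count (fun j => f (nth 0 s j) (nth 0 s j.+1)) (iota 0 (size s).-1).
Proof.
elim: s => [|a [|b s] IH] //.
rewrite (_ : count_adj f [:: a, b & s] = f a b + count_adj f (b :: s)) // IH.
rewrite /= -[1]/(1 + 0) iotaDl count_map.
by congr (_ + _); apply: eq_count => j /=; rewrite add1n.
Qed.

Lemma count_adj_node f ts : count_adj f (lword (Node ts)) =
  (if ts is c :: _ then f (size ts) (root_deg c) else 0) + count_adj f (lword_forest ts).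
Proof. by case: ts => [|c ts] //=; rewrite {1}/lword_forest /= lwordE. Qed.

Lemma count_adj_forest f c ts : count_adj f (lword_forest (c :: ts)) =
  count_adj f (lword c) + (if ts is c' :: _ then f 0 (root_deg c') else 0) +
  count_adj f (lword_forest ts).
Proof.
rewrite /lword_forest /= lwordE count_adj_cat -lwordE.
have := last_lword c; rewrite lwordE /= => ->.
by case: ts => [|[cs] ts] //=; rewrite /lword_forest /= lwordE.
Qed.

Definition old_pair a b := (0 < a) && (b == 0).
Definition young_pair a b := (a == 0) && (b == 0).

(* A vertex of degree [b] following a vertex of degree [a] in preorder is a
   leaf iff [b = 0]; it is the first child of its parent iff [a > 0]. *)
Lemma old_leaves_count_adj t : old_leaves t = count_adj old_pair (lword t).
Proof.
elim/ptree_nested_ind: t => ts IH; rewrite count_adj_node /=.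
congr (_ + _); first by case: ts {IH} => [|[[]] ts].
elim: ts IH => [|c ts IHts] IH //; rewrite count_adj_forest /= -IH; last by left.
rewrite IHts => [|d d_in]; last by apply: IH; right.
by case: ts {IHts IH} => [|? ?]; rewrite /= !addn0.
Qed.

Lemma young_leaves_count_adj t : young_leaves t = count_adj young_pair (lword t).
Proof.
elim/ptree_nested_ind: t => ts IH; rewrite count_adj_node /=.
rewrite [X in _ = X + _](_ : _ = 0) ?add0n; last by case: ts {IH}.
elim: ts IH => [|c ts IHts] IH //; rewrite count_adj_forest /= -IH; last by left.
rewrite -IHts => [|d d_in]; last by apply: IH; right.
by case: ts {IHts IH} => [|[[|? ?]] ts] /=; lia.
Qed.

Lemma lword_dyck_seq n T : edges T = n ->
  [/\ dyck_seq n (lword T), size (lword T) = n.+1 & nth 0 (lword T) n = 0].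
Proof.
move=> eT; have sz := size_lword T; have sm := sumn_lword T; rewrite eT in sz sm.
have last0 : nth 0 (lword T) n = 0.
  have := last_lword T; have := nth_last 0 (lword T); rewrite sz /=.
  by case: (lword T) => [|a A] //= ->.
split => //; split.
  by have := psumS (lword T) n; rewrite last0 /psum take_oversize ?sz // sm; lia.
by move=> t le_tn; have [_ /(_ t)] := forest_word_lword T; rewrite sz; lia.
Qed.

Lemma dyck_seq_forest_word n D :
  dyck_seq n D -> size D = n.+1 -> nth 0 D n = 0 -> forest_word 1 D.
Proof.
move=> [D_psum D_dyck] sz last0; rewrite /forest_word sz; split => [| t lt_tn].
  have := psumS D n; rewrite last0 /psum take_oversize ?sz // addn0 => ->.
  by move: D_psum; rewrite /psum => ->; rewrite addn1.
by have := D_dyck t lt_tn; lia.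
Qed.

Definition tree_perm n T : 'S_n := arrange_perm n (internal (lword T)) (internal_val n (lword T)).

Lemma ballot_lword n T : edges T = n ->
  ballot n (internal (lword T)) (internal_val n (lword T)).
Proof. by case/lword_dyck_seq => /ballot_internal. Qed.

Lemma tree_perm_avoids321 n T : edges T = n -> avoids321 (tree_perm n T).
Proof. by move/ballot_lword/arrange_perm_avoids321. Qed.

Lemma wexc_tree_perm n T j : edges T = n -> j <= n -> wexc (tree_perm n T) j = internal (lword T) j.
Proof.
move=> eT; rewrite leq_eqVlt => /orP[/eqP -> | lt_jn]; last first.
  by rewrite /tree_perm (wexc_arrange_perm (ballot_lword eT)).
by case: (lword_dyck_seq eT) => _ _ last0; rewrite /wexc ltnn /internal last0.
Qed.

Lemma tree_perm_inj n T1 T2 :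
  edges T1 = n -> edges T2 = n -> tree_perm n T1 = tree_perm n T2 -> T1 = T2.
Proof.
move=> e1 e2 eq12; apply: lword_inj.
have [D1_dyck sz1 last1] := lword_dyck_seq e1.
have [D2_dyck sz2 last2] := lword_dyck_seq e2.
have eI j : j < n -> internal (lword T1) j = internal (lword T2) j.
  by move=> lt_jn; rewrite -(wexc_tree_perm e1 (ltnW lt_jn)) -(wexc_tree_perm e2 (ltnW lt_jn)) eq12.
apply: (eq_dyck_seq D1_dyck D2_dyck sz1 sz2 last1 last2 eI) => v lt_vn.
rewrite (ballot_valE (ballot_lword e1) lt_vn) (ballot_valE (ballot_lword e2) lt_vn).
apply: eq_existsb => i; rewrite eI // -!(arrange_permE (ballot_lword _)) //.
by rewrite /tree_perm in eq12; rewrite eq12.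
Qed.

Lemma tree_perm_surj n (p : 'S_n) :
  0 < n -> avoids321 p -> exists2 T, edges T = n & tree_perm n T = p.
Proof.
move=> n0 p321; have WV := ballot_wexc p321.
have [T eT] := tree_wordP (dyck_seq_forest_word (dyck_seq_ballot_word WV n0)
  (size_ballot_word _ _ _) (nth_ballot_word_last _ _ _)).
have eE : edges T = n by have := size_lword T; rewrite eT size_ballot_word => -[].
exists T => //; rewrite -[RHS](arrange_perm_wexc p321) /tree_perm.
apply/permP => i; apply/val_inj.
rewrite (arrange_permE (ballot_lword eE)) (arrange_permE WV).
by apply: eq_arrange => // x lt_xn; rewrite eT (internal_ballot_word, internal_val_ballot_word).
Qed.

Lemma stat_old_tree_perm n T : edges T = n -> stat_old (tree_perm n T) = old_leaves T.
Proof.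
move=> eT; have [_ sz _] := lword_dyck_seq eT.
rewrite old_leaves_count_adj count_adjE sz /=.
apply: eq_in_count => j; rewrite mem_iota add0n => /andP[_ lt_jn].
by rewrite /old_pair eqn0Ngt !(wexc_tree_perm eT) // ltnW.
Qed.

Lemma stat_young_tree_perm n T :
  0 < n -> edges T = n -> stat_young (tree_perm n T) = young_leaves T.
Proof.
move=> n0 eT; have [_ sz last0] := lword_dyck_seq eT.
have defic_tree_perm j : j < n -> defic (tree_perm n T) j = ~~ internal (lword T) j.
  by move=> lt_jn; rewrite -(wexc_tree_perm eT (ltnW lt_jn)) /defic /wexc lt_jn -ltnNge.
rewrite young_leaves_count_adj count_adjE sz /= /stat_young.
have -> : iota 0 n = iota 0 n.-1 ++ [:: n.-1].
  by rewrite -{1}(prednK n0) -addn1 iotaD.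
rewrite count_cat /= addn0.
have lt_n1n : n.-1 < n by rewrite prednK.
congr (_ + _).
  apply: eq_in_count => j; rewrite mem_iota add0n => /andP[_ lt_jn].
  by rewrite /young_pair !eqn0Ngt -!defic_tree_perm //; lia.
by rewrite /young_pair prednK // last0 eqxx andbT eqn0Ngt -defic_tree_perm // /defic lt_n1n.
Qed.

Theorem mainTheorem12 (n : nat) (hn : 1 <= n) :
  exists phi : ptree -> 'S_n,
    [/\ (forall T, edges T = n -> avoids321 (phi T)),
        (forall T1 T2, edges T1 = n -> edges T2 = n -> phi T1 = phi T2 -> T1 = T2),
        (forall p : 'S_n, avoids321 p -> exists T, edges T = n /\ phi T = p)
      & (forall T, edges T = n ->
           young_leaves T = stat_young (phi T) /\ old_leaves T = stat_old (phi T))].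
Proof.
exists (tree_perm n); split.
- exact: tree_perm_avoids321.
- exact: tree_perm_inj.
- by move=> p /(tree_perm_surj hn) [T eT eP]; exists T.
- by move=> T eT; rewrite stat_young_tree_perm ?stat_old_tree_perm.
Qed.
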